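(* Let $\mathcal{C}$ be a symmetric monoidal category with discarding and zero morphisms which satisfies normalisation. Then (i) if $\psi$ is a non-zero pure state, its normalisation is pure; and (ii) if $\psi$ and $\phi$ are pure states, then $\psi\otimes\phi$ is pure.
   Context: $\mathcal{C}$ is symmetric monoidal with unit $I$; unitors are suppressed. States are morphisms $I\to A$, scalars are morphisms $I\to I$. Discarding: effects $\top_A\colon A\to I$ with $\top_{A\otimes B}=\top_A\otimes\top_B$ and $\top_I=1_I$. A morphism $f\colon A\to B$ is causal if $\top_B\circ f=\top_A$; a state $\rho$ is causal if $\top\circ\rho=1_I$. Zero morphisms: for all objects $A,B$ a morphism $0\colon A\to B$ such that composing (via $\circ$) or tensoring (via $\otimes$) $0$ with any morphism yields $0$. Normalisation: every non-zero state $\rho$ can be written as $\rho=\sigma\otimes r$ for a scalar $r$ and a unique causal state $\sigma$, called the normalisation of $\rho$. A state $\sigma$ of $B\otimes C$ is a dilation of a morphism/state $f$ of $B$ if $(1_B\otimes\top_C)\circ\sigma=f$. A morphism $f\colon A\to B$ is pure if either $f=0$ or: whenever $g\colon A\to B\otimes C$ satisfies $(1_B\otimes\top_C)\circ g=f$, then $g=f\otimes\rho$ for some causal state $\rho$ of $C$. *)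

Set Implicit Arguments.
Unset Strict Implicit.

Record SMC := {
  Ob :> Type;
  Hom : Ob -> Ob -> Type;
  comp : forall {A B C : Ob}, Hom B C -> Hom A B -> Hom A C;
  idm : forall (A : Ob), Hom A A;
  comp_assoc : forall A B C D (h : Hom C D) (g : Hom B C) (f : Hom A B),
      comp h (comp g f) = comp (comp h g) f;
  comp_id_l : forall A B (f : Hom A B), comp (idm B) f = f;
  comp_id_r : forall A B (f : Hom A B), comp f (idm A) = f;

  I : Ob;
  ten : Ob -> Ob -> Ob;
  tenm : forall {A B C D : Ob}, Hom A B -> Hom C D -> Hom (ten A C) (ten B D);
  tenm_id : forall A B, tenm (idm A) (idm B) = idm (ten A B);
  tenm_comp : forall A B C A' B' C' (g : Hom B C) (f : Hom A B)
                (g' : Hom B' C') (f' : Hom A' B'),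
      tenm (comp g f) (comp g' f') = comp (tenm g g') (tenm f f');

  assoc : forall A B C, Hom (ten (ten A B) C) (ten A (ten B C));
  associnv : forall A B C, Hom (ten A (ten B C)) (ten (ten A B) C);
  assoc_inv1 : forall A B C, comp (associnv A B C) (assoc A B C) = idm _;
  assoc_inv2 : forall A B C, comp (assoc A B C) (associnv A B C) = idm _;
  assoc_nat : forall A B C A' B' C' (f : Hom A A') (g : Hom B B') (h : Hom C C'),
      comp (assoc A' B' C') (tenm (tenm f g) h)
      = comp (tenm f (tenm g h)) (assoc A B C);

  lunit : forall A, Hom (ten I A) A;
  lunitinv : forall A, Hom A (ten I A);
  lunit_inv1 : forall A, comp (lunitinv A) (lunit A) = idm _;
  lunit_inv2 : forall A, comp (lunit A) (lunitinv A) = idm _;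
  lunit_nat : forall A B (f : Hom A B),
      comp (lunit B) (tenm (idm I) f) = comp f (lunit A);

  runit : forall A, Hom (ten A I) A;
  runitinv : forall A, Hom A (ten A I);
  runit_inv1 : forall A, comp (runitinv A) (runit A) = idm _;
  runit_inv2 : forall A, comp (runit A) (runitinv A) = idm _;
  runit_nat : forall A B (f : Hom A B),
      comp (runit B) (tenm f (idm I)) = comp f (runit A);

  braid : forall A B, Hom (ten A B) (ten B A);
  braid_invol : forall A B, comp (braid B A) (braid A B) = idm _;
  braid_nat : forall A B A' B' (f : Hom A A') (g : Hom B B'),
      comp (braid A' B') (tenm f g) = comp (tenm g f) (braid A B);

  pentagon : forall A B C D,
      comp (assoc A B (ten C D)) (assoc (ten A B) C D)
      = comp (tenm (idm A) (assoc B C D))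
             (comp (assoc A (ten B C) D) (tenm (assoc A B C) (idm D)));
  triangle : forall A B,
      comp (tenm (idm A) (lunit B)) (assoc A I B) = tenm (runit A) (idm B);
  hexagon : forall A B C,
      comp (assoc B C A) (comp (braid A (ten B C)) (assoc A B C))
      = comp (tenm (idm B) (braid A C))
             (comp (assoc B A C) (tenm (braid A B) (idm C)))
}.

Arguments Hom {s}.
Arguments comp {s A B C}.
Arguments idm {s}.
Arguments I {s}.
Arguments ten {s}.
Arguments tenm {s A B C D}.
Arguments assoc {s}.
Arguments associnv {s}.
Arguments lunit {s}.
Arguments lunitinv {s}.
Arguments runit {s}.
Arguments runitinv {s}.
Arguments braid {s}.

Record SMCDZ := {
  smc :> SMC;
  disc : forall (A : smc), Hom A I;
  disc_ten : forall (A B : smc),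
      disc (ten A B) = comp (lunit I) (tenm (disc A) (disc B));
  disc_I : disc I = idm I;
  zero : forall (A B : smc), Hom A B;
  zero_comp_l : forall (A B C : smc) (g : Hom B C), comp g (zero A B) = zero A C;
  zero_comp_r : forall (A B C : smc) (f : Hom A B), comp (zero B C) f = zero A C;
  zero_ten_l : forall (A B C D : smc) (f : Hom C D),
      tenm (zero A B) f = zero (ten A C) (ten B D);
  zero_ten_r : forall (A B C D : smc) (f : Hom A B),
      tenm f (zero C D) = zero (ten A C) (ten B D)
}.

Arguments disc {s}.
Arguments zero {s}.

Section Notions.
Variable C : SMCDZ.

Definition state (A : C) := @Hom C I A.
Definition scalar := @Hom C I I.

Definition causal {A B : C} (f : Hom A B) : Prop := comp (disc B) f = disc A.
Definition causal_state {A : C} (rho : state A) : Prop :=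
  comp (disc A) rho = idm I.

(** Tensor of two states, as a state of A (x) B (unitor I ~ I (x) I inserted). *)
Definition state_ten {A B : C} (s : state A) (t : state B) : state (ten A B) :=
  comp (tenm s t) (lunitinv I).

Definition state_scale {A : C} (s : state A) (r : scalar) : state A :=
  comp (runit A) (state_ten s r).

Definition normalisation : Prop :=
  forall (A : C) (rho : state A), rho <> zero I A ->
    exists sigma : state A,
      causal_state sigma /\ (exists r : scalar, rho = state_scale sigma r) /\
      (forall (sigma' : state A) (r' : scalar),
          causal_state sigma' -> rho = state_scale sigma' r' -> sigma' = sigma).

Definition is_normalisation {A : C} (rho sigma : state A) : Prop :=
  causal_state sigma /\ exists r : scalar, rho = state_scale sigma r.

Definition marginal {A B E : C} (g : Hom A (ten B E)) : Hom A B :=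
  comp (runit B) (comp (tenm (idm B) (disc E)) g).

Definition tensor_with_state {A B E : C} (f : Hom A B) (rho : state E)
  : Hom A (ten B E) :=
  comp (tenm f rho) (runitinv A).

Definition pure {A B : C} (f : Hom A B) : Prop :=
  f = zero A B \/
  forall (E : C) (g : Hom A (ten B E)),
    marginal g = f ->
    exists rho : state E, causal_state rho /\ g = tensor_with_state f rho.

End Notions.

(* Purity survives rescaling by scalars, because uniqueness of normalisation
   cancels scalars between causal states.  For (i), a dilation g of the
   normalisation sigma of psi = sigma r yields the dilation g r of psi, so
   g r = (sigma (x) rho) r; as g and sigma (x) rho are both causal, g equals
   sigma (x) rho.  For (ii), the tensor of two pure causal states p, q is pure:
   a dilation of p (x) q, reassociated, is a dilation of p, hence of the form
   p (x) tau, and discarding the causal p shows that tau dilates q.  Finally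
   psi (x) phi is such a tensor of normalisations times a scalar, and a pure
   causal state times a scalar stays pure, the scalar being recovered by
   discarding. *)

From Stdlib Require Import Classical.
Set Implicit Arguments.
Unset Strict Implicit.

Section Coherence.
Variable S : SMC.
Implicit Types A B C D X : S.

Lemma tenm_split A B C D (f : Hom A B) (g : Hom C D) :
  tenm f g = comp (tenm f (idm D)) (tenm (idm A) g).
Proof. rewrite <- tenm_comp, comp_id_l, comp_id_r. reflexivity. Qed.

Lemma tenm_comp_l A B C D D' (g : Hom B C) (f : Hom A B) (h : Hom D D') :
  tenm (comp g f) h = comp (tenm g h) (tenm f (idm D)).
Proof. rewrite <- tenm_comp, comp_id_r. reflexivity. Qed.

Lemma tenm_comp_r A B C D D' (g : Hom B C) (f : Hom A B) (h : Hom D D') :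
  tenm h (comp g f) = comp (tenm h g) (tenm (idm D) f).
Proof. rewrite <- tenm_comp, comp_id_r. reflexivity. Qed.

Lemma tenm_idm_I_r A B (f : Hom A B) :
  tenm f (idm I) = comp (runitinv B) (comp f (runit A)).
Proof. rewrite <- runit_nat, comp_assoc, runit_inv1, comp_id_l. reflexivity. Qed.

Lemma tenm_idm_I_l A B (f : Hom A B) :
  tenm (idm I) f = comp (lunitinv B) (comp f (lunit A)).
Proof. rewrite <- lunit_nat, comp_assoc, lunit_inv1, comp_id_l. reflexivity. Qed.

Lemma runitinv_nat A B (f : Hom A B) :
  comp (runitinv B) f = comp (tenm f (idm I)) (runitinv A).
Proof. rewrite tenm_idm_I_r, <- !comp_assoc, runit_inv2, comp_id_r. reflexivity. Qed.

Lemma runit_tenm_runitinv A B (f : Hom A B) :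
  comp (runit B) (comp (tenm f (idm I)) (runitinv A)) = f.
Proof.
  rewrite tenm_idm_I_r, !comp_assoc, runit_inv2, comp_id_l, <- comp_assoc, runit_inv2.
  apply comp_id_r.
Qed.

Lemma lunit_tenm_lunitinv A B (f : Hom A B) :
  comp (lunit B) (comp (tenm (idm I) f) (lunitinv A)) = f.
Proof.
  rewrite tenm_idm_I_l, !comp_assoc, lunit_inv2, comp_id_l, <- comp_assoc, lunit_inv2.
  apply comp_id_r.
Qed.

Lemma tenm_idm_I_r_inj A B (f g : Hom A B) :
  tenm f (idm I) = tenm g (idm I) -> f = g.
Proof.
  intro H. rewrite <- (runit_tenm_runitinv f), <- (runit_tenm_runitinv g), H. reflexivity.
Qed.

Lemma tenm_idm_I_l_inj A B (f g : Hom A B) :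
  tenm (idm I) f = tenm (idm I) g -> f = g.
Proof.
  intro H. rewrite <- (lunit_tenm_lunitinv f), <- (lunit_tenm_lunitinv g), H. reflexivity.
Qed.

Lemma assoc_inj A B C X (f g : Hom X (ten (ten A B) C)) :
  comp (assoc A B C) f = comp (assoc A B C) g -> f = g.
Proof.
  intro H. rewrite <- (comp_id_l f), <- (comp_id_l g), <- (assoc_inv1 A B C).
  rewrite <- !comp_assoc, H. reflexivity.
Qed.

Lemma associnv_nat A B C A' B' C' (f : Hom A A') (g : Hom B B') (h : Hom C C') :
  comp (associnv A' B' C') (tenm f (tenm g h))
  = comp (tenm (tenm f g) h) (associnv A B C).
Proof.
  apply assoc_inj. rewrite !comp_assoc, assoc_inv2, comp_id_l, assoc_nat.
  rewrite <- comp_assoc, assoc_inv2, comp_id_r. reflexivity.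
Qed.

(* Kelly's coherence lemma, from the pentagon and the triangle. *)
Lemma runit_ten A B :
  runit (ten A B) = comp (tenm (idm A) (runit B)) (assoc A B I).
Proof.
  apply tenm_idm_I_r_inj, (assoc_inj (A := A) (B := B) (C := I)).
  rewrite <- triangle, comp_assoc, <- (tenm_id A B), assoc_nat, <- comp_assoc, pentagon.
  rewrite !comp_assoc, <- tenm_comp, comp_id_l, triangle.
  rewrite <- (assoc_nat (idm A) (runit B) (idm I)), <- comp_assoc, <- tenm_comp, comp_id_l.
  reflexivity.
Qed.

Lemma lunit_I : lunit (@I S) = runit I.
Proof.
  apply tenm_idm_I_l_inj.
  assert (Hrunit : tenm (runit (@I S)) (idm I) = runit (ten I I)).
  { rewrite <- (comp_id_l (tenm _ _)), <- (runit_inv1 I), <- comp_assoc, runit_nat.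
    rewrite comp_assoc, runit_inv1, comp_id_l. reflexivity. }
  rewrite <- (comp_id_r (tenm (idm I) (lunit I))), <- (assoc_inv2 I I I).
  rewrite comp_assoc, triangle, Hrunit, runit_ten, <- comp_assoc, assoc_inv2, comp_id_r.
  reflexivity.
Qed.

Lemma lunitinv_I : lunitinv (@I S) = runitinv I.
Proof.
  rewrite <- (comp_id_l (lunitinv I)), <- (runit_inv1 I), <- lunit_I, <- comp_assoc,
    lunit_inv2, comp_id_r.
  reflexivity.
Qed.

Lemma assoc_runitinv A B :
  comp (assoc A I B) (tenm (runitinv A) (idm B)) = tenm (idm A) (lunitinv B).
Proof.
  assert (Hinv : comp (tenm (idm A) (lunitinv B)) (tenm (idm A) (lunit B)) = idm _)
    by (rewrite <- tenm_comp, comp_id_l, lunit_inv1, tenm_id; reflexivity).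
  rewrite <- (comp_id_l (comp (assoc A I B) _)), <- Hinv, <- comp_assoc.
  rewrite (comp_assoc (tenm (idm A) (lunit B))), triangle, <- tenm_comp, runit_inv2.
  rewrite comp_id_l, tenm_id, comp_id_r. reflexivity.
Qed.

End Coherence.

Section Discarding.
Variable C : SMCDZ.
Implicit Types A B E X Y : C.

Lemma state_scale_comp A (s : state A) (r : scalar C) : state_scale s r = comp s r.
Proof.
  unfold state_scale, state_ten.
  rewrite tenm_split, !comp_assoc, runit_nat, <- lunit_I, <- !comp_assoc.
  rewrite (comp_assoc (lunit I)), lunit_nat, <- comp_assoc, lunit_inv2, comp_id_r.
  reflexivity.
Qed.

Lemma state_ten_tensor_with_state A B (s : state A) (t : state B) :
  state_ten s t = tensor_with_state s t.
Proof. unfold state_ten, tensor_with_state. rewrite lunitinv_I. reflexivity. Qed.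

Lemma tensor_with_state_comp X Y B E (f : Hom Y B) (h : Hom X Y) (rho : state E) :
  tensor_with_state (comp f h) rho = comp (tensor_with_state f rho) h.
Proof.
  unfold tensor_with_state.
  rewrite tenm_comp_l, <- !comp_assoc, runitinv_nat. reflexivity.
Qed.

Lemma marginal_comp X Y B E (g : Hom Y (ten B E)) (h : Hom X Y) :
  marginal (comp g h) = comp (marginal g) h.
Proof. unfold marginal. rewrite <- !comp_assoc. reflexivity. Qed.

Lemma marginal_zero X B E : marginal (zero X (ten B E)) = zero X B.
Proof. unfold marginal. rewrite !zero_comp_l. reflexivity. Qed.

Lemma marginal_tensor_with_state X B E (f : Hom X B) (rho : state E) :
  causal_state rho -> marginal (tensor_with_state f rho) = f.
Proof.
  intro Hrho. unfold marginal, tensor_with_state.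
  rewrite (comp_assoc (tenm _ _)), <- tenm_comp, comp_id_l, Hrho.
  apply runit_tenm_runitinv.
Qed.

Lemma disc_comp_marginal X B E (g : Hom X (ten B E)) :
  comp (disc (ten B E)) g = comp (disc B) (marginal g).
Proof.
  unfold marginal. rewrite disc_ten, tenm_split, lunit_I, !comp_assoc, runit_nat.
  reflexivity.
Qed.

Lemma causal_state_marginal B E (g : state (ten B E)) :
  causal_state (marginal g) <-> causal_state g.
Proof. unfold causal_state. rewrite disc_comp_marginal. tauto. Qed.

Lemma disc_comp_causal A (sigma : state A) (r : scalar C) :
  causal_state sigma -> comp (disc A) (comp sigma r) = r.
Proof. intro Hsigma. rewrite comp_assoc, Hsigma. apply comp_id_l. Qed.

Lemma marginal_assoc X A B E (g : Hom X (ten (ten A B) E)) :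
  marginal (comp (assoc A B E) g) = marginal (marginal g).
Proof.
  unfold marginal. rewrite disc_ten, tenm_comp_r, <- !comp_assoc.
  rewrite (comp_assoc (tenm (idm A) (tenm _ _))), <- assoc_nat, <- !comp_assoc.
  rewrite (comp_assoc (tenm (idm A) (lunit I))), triangle.
  rewrite (comp_assoc (tenm (runit A) _)), <- tenm_comp, comp_id_l, tenm_split.
  rewrite !comp_assoc, runit_nat, <- !comp_assoc. reflexivity.
Qed.

Lemma marginal_associnv_tensor_with_state X A B E (f : Hom X A) (tau : state (ten B E)) :
  marginal (comp (associnv A B E) (tensor_with_state f tau))
  = tensor_with_state f (marginal tau).
Proof.
  unfold marginal, tensor_with_state.
  rewrite (comp_assoc (tenm _ _) (associnv _ _ _)), <- (tenm_id A B), <- associnv_nat.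
  rewrite <- !comp_assoc, (comp_assoc (runit _)), runit_ten, <- !comp_assoc.
  rewrite (comp_assoc (assoc _ _ _)), assoc_inv2, comp_id_l.
  rewrite !comp_assoc, <- !tenm_comp, !comp_id_l. reflexivity.
Qed.

Lemma assoc_tensor_with_state X A B E (f : Hom X A) (s : state B) (rho : state E) :
  comp (assoc A B E) (tensor_with_state (tensor_with_state f s) rho)
  = tensor_with_state f (state_ten s rho).
Proof.
  unfold tensor_with_state, state_ten.
  rewrite tenm_comp_l, !comp_assoc, assoc_nat, <- !comp_assoc.
  rewrite (comp_assoc (assoc _ _ _)), assoc_runitinv, !comp_assoc, <- tenm_comp, comp_id_r.
  reflexivity.
Qed.

Lemma discard_left_tensor_with_state A B (p : state A) (x : state B) :
  causal_state p ->
  comp (lunit B) (comp (tenm (disc A) (idm B)) (tensor_with_state p x)) = x.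
Proof.
  intro Hp. unfold tensor_with_state.
  rewrite (comp_assoc (tenm _ _)), <- tenm_comp, comp_id_l, Hp.
  rewrite !comp_assoc, lunit_nat, <- !comp_assoc, lunit_I, runit_inv2.
  apply comp_id_r.
Qed.

Lemma tensor_with_state_inj A B (p : state A) (x y : state B) :
  causal_state p -> tensor_with_state p x = tensor_with_state p y -> x = y.
Proof.
  intros Hp Hxy.
  rewrite <- (discard_left_tensor_with_state x Hp), <- (discard_left_tensor_with_state y Hp).
  rewrite Hxy. reflexivity.
Qed.

Lemma state_ten_causal A B (p : state A) (q : state B) :
  causal_state p -> causal_state q -> causal_state (state_ten p q).
Proof.
  unfold causal_state, state_ten. intros Hp Hq.
  rewrite comp_assoc, disc_ten, <- !comp_assoc, (comp_assoc (tenm (disc A) (disc B))).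
  rewrite <- tenm_comp, Hp, Hq, tenm_id, comp_id_l. apply lunit_inv2.
Qed.

Lemma state_ten_comp A B (s : state A) (t : state B) (r u : scalar C) :
  state_ten (comp s r) (comp t u)
  = comp (state_ten s t) (comp (lunit I) (state_ten r u)).
Proof.
  unfold state_ten. rewrite tenm_comp, <- !comp_assoc.
  rewrite (comp_assoc (lunitinv I)), lunit_inv1, comp_id_l. reflexivity.
Qed.

Lemma state_ten_zero_l A B (t : state B) : state_ten (zero I A) t = zero I (ten A B).
Proof. unfold state_ten. rewrite zero_ten_l. apply zero_comp_r. Qed.

Lemma state_ten_zero_r A B (s : state A) : state_ten s (zero I B) = zero I (ten A B).
Proof. unfold state_ten. rewrite zero_ten_r. apply zero_comp_r. Qed.

Lemma state_eq0_of_trivial A (s : state A) : idm (@I C) = zero I I -> s = zero I A.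
Proof. intro H01. rewrite <- (comp_id_r s), H01. apply zero_comp_l. Qed.

Lemma causal_state_neq0 A (p : state A) :
  idm (@I C) <> zero I I -> causal_state p -> p <> zero I A.
Proof.
  intros H01 Hp Hp0. apply H01. rewrite <- Hp, Hp0. apply zero_comp_l.
Qed.

Lemma pure_dilation X B E (f : Hom X B) (g : Hom X (ten B E)) :
  pure f -> f <> zero X B -> marginal g = f ->
  exists rho : state E, causal_state rho /\ g = tensor_with_state f rho.
Proof. intros [Hf0 | Hf] Hf_neq0 Hg; [contradiction | exact (Hf E g Hg)]. Qed.

Lemma pure_state_ten_causal A B (p : state A) (q : state B) :
  causal_state p -> causal_state q -> pure p -> pure q -> pure (state_ten p q).
Proof.
  intros Hp Hq Hpp Hpq.
  destruct (classic (idm (@I C) = zero I I)) as [H01 | H01].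
  { left. apply state_eq0_of_trivial, H01. }
  right. intros E g Hg. rewrite state_ten_tensor_with_state in *.
  destruct (pure_dilation (g := comp (assoc A B E) g) Hpp (causal_state_neq0 H01 Hp))
    as [tau [Htau Hg_tau]].
  { rewrite marginal_assoc, Hg. apply marginal_tensor_with_state, Hq. }
  assert (Hmtau : marginal tau = q).
  { apply (tensor_with_state_inj Hp).
    rewrite <- marginal_associnv_tensor_with_state, <- Hg_tau.
    rewrite comp_assoc, assoc_inv1, comp_id_l. exact Hg. }
  destruct (pure_dilation Hpq (causal_state_neq0 H01 Hq) Hmtau) as [rho [Hrho Htau_rho]].
  exists rho. split; [exact Hrho |].
  apply assoc_inj.
  rewrite Hg_tau, Htau_rho, assoc_tensor_with_state, state_ten_tensor_with_state.
  reflexivity.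
Qed.

End Discarding.

Section Normalisation.
Variable C : SMCDZ.
Hypothesis Hnorm : normalisation C.
Implicit Types A B : C.

Lemma normalisation_exists A (rho : state A) :
  rho <> zero I A -> exists sigma r, causal_state sigma /\ rho = comp sigma r.
Proof.
  intro Hrho. destruct (Hnorm Hrho) as [sigma [Hsigma [[r Hr] _]]].
  exists sigma, r. rewrite <- state_scale_comp. auto.
Qed.

Lemma normalisation_unique A (rho s t : state A) (r u : scalar C) :
  rho <> zero I A -> causal_state s -> causal_state t ->
  rho = comp s r -> rho = comp t u -> s = t.
Proof.
  intros Hrho Hs Ht Hsr Htu. destruct (Hnorm Hrho) as [sigma [_ [_ Huniq]]].
  rewrite (Huniq s r), (Huniq t u); auto; rewrite state_scale_comp; assumption.
Qed.

Lemma pure_normalisation A (psi sigma : state A) :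
  psi <> zero I A -> pure psi -> is_normalisation psi sigma -> pure sigma.
Proof.
  intros Hpsi0 Hpsi [Hsigma [r Hr]]. rewrite state_scale_comp in Hr.
  right. intros E g Hg.
  destruct (pure_dilation (g := comp g r) Hpsi Hpsi0) as [rho [Hrho Hgr]].
  { rewrite marginal_comp, Hg. symmetry. exact Hr. }
  exists rho. split; [exact Hrho |].
  apply (normalisation_unique (rho := comp g r) (r := r) (u := r)).
  - intro H0. apply Hpsi0. rewrite Hr, <- Hg, <- marginal_comp, H0. apply marginal_zero.
  - apply causal_state_marginal. rewrite Hg. exact Hsigma.
  - apply causal_state_marginal. rewrite marginal_tensor_with_state; assumption.
  - reflexivity.
  - rewrite Hgr, Hr. apply tensor_with_state_comp.
Qed.

Lemma pure_causal_comp_scalar A (chi : state A) (t : scalar C) :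
  causal_state chi -> pure chi -> pure (comp chi t).
Proof.
  intros Hchi Hpure.
  destruct (classic (comp chi t = zero I A)) as [H0 | Hchit0]; [left; exact H0 |].
  right. intros E g Hg.
  assert (Hg0 : g <> zero I (ten A E)).
  { intro H0. apply Hchit0. rewrite <- Hg, H0. apply marginal_zero. }
  destruct (normalisation_exists Hg0) as [s [u [Hs Hsu]]].
  assert (Hms : marginal s = chi).
  { apply (normalisation_unique (rho := comp chi t) (r := u) (u := t)); auto.
    - apply causal_state_marginal. exact Hs.
    - rewrite <- Hg, Hsu. apply marginal_comp. }
  assert (Hchi0 : chi <> zero I A).
  { intro H0. apply Hchit0. rewrite H0. apply zero_comp_r. }
  destruct (pure_dilation Hpure Hchi0 Hms) as [rho [Hrho Hs_rho]].
  exists rho. split; [exact Hrho |].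
  assert (Hut : u = t).
  { rewrite <- (disc_comp_causal u Hs), <- Hsu, disc_comp_marginal, Hg.
    apply disc_comp_causal, Hchi. }
  rewrite Hsu, Hs_rho, Hut, tensor_with_state_comp. reflexivity.
Qed.

Lemma pure_state_factor A (psi : state A) :
  pure psi -> psi <> zero I A ->
  exists sigma r, causal_state sigma /\ pure sigma /\ psi = comp sigma r.
Proof.
  intros Hpsi Hpsi0. destruct (normalisation_exists Hpsi0) as [sigma [r [Hsigma Hr]]].
  exists sigma, r. split; [exact Hsigma |]. split; [| exact Hr].
  apply (pure_normalisation Hpsi0 Hpsi). split; [exact Hsigma |].
  exists r. rewrite state_scale_comp. exact Hr.
Qed.

Lemma pure_state_ten A B (psi : state A) (phi : state B) :
  pure psi -> pure phi -> pure (state_ten psi phi).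
Proof.
  intros Hpsi Hphi.
  destruct (classic (psi = zero I A)) as [-> | Hpsi0].
  { left. apply state_ten_zero_l. }
  destruct (classic (phi = zero I B)) as [-> | Hphi0].
  { left. apply state_ten_zero_r. }
  destruct (pure_state_factor Hpsi Hpsi0) as [s [r [Hs [Hps ->]]]].
  destruct (pure_state_factor Hphi Hphi0) as [t [u [Ht [Hpt ->]]]].
  rewrite state_ten_comp. apply pure_causal_comp_scalar.
  - apply state_ten_causal; assumption.
  - apply pure_state_ten_causal; assumption.
Qed.

End Normalisation.

Theorem mainTheorem5 (C : SMCDZ) (Hnorm : normalisation C) :
  (forall (A : C) (psi sigma : state A),
      psi <> zero I A -> pure psi -> is_normalisation psi sigma -> pure sigma)
  /\
  (forall (A B : C) (psi : state A) (phi : state B),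
      pure psi -> pure phi -> pure (state_ten psi phi)).
Proof.
  split.
  - exact (pure_normalisation Hnorm).
  - exact (pure_state_ten Hnorm).
Qed.
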